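(* Let $\Lambda$ be a source-free, finite, primitive, non-empty $k$-graph with shift $\sigma$ on $\Lambda^\infty$, and let $\varphi=(\varphi_1,\dots,\varphi_k)$ be continuous real-valued functions on $\Lambda^\infty$ satisfying $\varphi_i+\varphi_j\circ\sigma_i=\varphi_j+\varphi_i\circ\sigma_j$ for all $i,j$, such that $(\Lambda^\infty,\sigma,\varphi)$ admits a unique solution $(\boldsymbol\lambda^\varphi,\mu^\varphi)$ for the positive eigenvalue problem of the dual of the Ruelle operator. Then $\mu^\varphi(\mathcal{Z}(\lambda))>0$ for every $\lambda\in\Lambda$.
   Context: $k$-graph: countable category $\Lambda$ with degree functor $d:\Lambda\to\mathbb{N}^k$ with unique factorization. finite: each $\Lambda^n=d^{-1}(n)$ finite; source-free: $v\Lambda^n\ne\varnothing$ for every vertex $v$ and $n$; primitive: some $n\ne0$ with $v\Lambda^nw\ne\varnothing$ for all vertices $v,w$. $\Lambda^\infty$: degree-preserving functors $x:\Omega_k\to\Lambda$ ($\Omega_k=\{(m,n):m\le n\}$, $d(m,n)=n-m$), cylinder sets $\mathcal{Z}(\lambda)=\{x:x(0,d(\lambda))=\lambda\}$. Shift: $\sigma_i(x)(m,n)=x(m+\mathbf{e}_i,n+\mathbf{e}_i)$. Ruelle operator $(\mathcal{L}_{T,\psi}f)(x)=\sum_{y\in T^{-1}(x)}e^{\psi(y)}f(y)$ with dual $\mathcal{L}^*$ on finite signed Borel measures. ''Admits a unique solution...'': unique $(\boldsymbol\lambda,\mu)$ with $\boldsymbol\lambda\in(0,\infty)^k$, $\mu$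 a Borel probability measure, $\mathcal{L}^*_{\sigma_i,\varphi_i}\mu=\lambda_i\mu$ for all $i$. *)

From HB Require Import structures.
From mathcomp Require Import all_boot all_order all_algebra.
From mathcomp Require Import all_classical all_reals.
From mathcomp Require Import topology normedtype sequences exp measure lebesgue_integral.
Set Implicit Arguments. Unset Strict Implicit. Unset Printing Implicit Defensive.
Import numFieldTopology.Exports numFieldNormedType.Exports.
Import Order.TTheory GRing.Theory Num.Theory.
Local Open Scope classical_set_scope.
Local Open Scope ring_scope.

Definition Nk (k : nat) := {ffun 'I_k -> nat}.
Definition addNk k (m n : Nk k) : Nk k := [ffun j => (m j + n j)%N].
Definition subNk k (m n : Nk k) : Nk k := [ffun j => (m j - n j)%N].
Definition zeroNk k : Nk k := [ffun => 0%N].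
Definition eNk k (i : 'I_k) : Nk k := [ffun j => nat_of_bool (j == i)].
Definition leNk k (m n : Nk k) : bool := [forall j, (m j <= n j)%N].

(* Morphisms f with kg_src f = kg_rng g compose as kg_comp f g = f g. *)
Record kgraph (k : nat) := KGraph {
  kg_obj : countType;
  kg_mor : countType;
  kg_src : kg_mor -> kg_obj;
  kg_rng : kg_mor -> kg_obj;
  kg_id : kg_obj -> kg_mor;
  kg_comp : kg_mor -> kg_mor -> kg_mor;
  kg_deg : kg_mor -> Nk k;
  kg_src_id : forall v, kg_src (kg_id v) = v;
  kg_rng_id : forall v, kg_rng (kg_id v) = v;
  kg_src_comp : forall f g, kg_src f = kg_rng g -> kg_src (kg_comp f g) = kg_src g;
  kg_rng_comp : forall f g, kg_src f = kg_rng g -> kg_rng (kg_comp f g) = kg_rng f;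
  kg_id_l : forall f, kg_comp (kg_id (kg_rng f)) f = f;
  kg_id_r : forall f, kg_comp f (kg_id (kg_src f)) = f;
  kg_assoc : forall f g h, kg_src f = kg_rng g -> kg_src g = kg_rng h ->
    kg_comp (kg_comp f g) h = kg_comp f (kg_comp g h);
  kg_deg_id : forall v, kg_deg (kg_id v) = zeroNk k;
  kg_deg_comp : forall f g, kg_src f = kg_rng g ->
    kg_deg (kg_comp f g) = addNk (kg_deg f) (kg_deg g);
  kg_fact : forall (l : kg_mor) (m n : Nk k), kg_deg l = addNk m n ->
    exists! p : kg_mor * kg_mor,
      [/\ kg_deg p.1 = m, kg_deg p.2 = n, kg_src p.1 = kg_rng p.2
        & kg_comp p.1 p.2 = l]
}.

Section KGraphProps.
Variables (k : nat) (L : kgraph k).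

Definition kg_finite : Prop :=
  forall n : Nk k, finite_set [set l : kg_mor L | kg_deg l = n].
Definition kg_source_free : Prop :=
  forall (v : kg_obj L) (n : Nk k), exists l : kg_mor L, kg_rng l = v /\ kg_deg l = n.
Definition kg_primitive : Prop :=
  exists n : Nk k, n != zeroNk k /\
    forall v w : kg_obj L, exists l : kg_mor L,
      [/\ kg_rng l = v, kg_deg l = n & kg_src l = w].
Definition kg_nonempty : Prop := inhabited (kg_mor L).
End KGraphProps.

(* The k-graph Ω_k = {(m,n) : m <= n}, r(m,n) = m, s(m,n) = n,          *)
(* (m,n)(n,p) = (m,p), d(m,n) = n - m.                                 *)
Definition Omega (k : nat) := {p : Nk k * Nk k | leNk p.1 p.2}.
Definition om_fst k (a : Omega k) : Nk k := (sval a).1.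
Definition om_snd k (a : Omega k) : Nk k := (sval a).2.

(* x : Ω_k -> Λ is a degree-preserving functor *)
Definition is_kpath k (L : kgraph k) (x : Omega k -> kg_mor L) : Prop :=
  [/\ (forall a, kg_deg (x a) = subNk (om_snd a) (om_fst a)),
      (forall a b c : Omega k, om_fst a = om_fst c -> om_snd a = om_fst b ->
          om_snd b = om_snd c ->
          kg_src (x a) = kg_rng (x b) /\ kg_comp (x a) (x b) = x c)
    & (forall a, om_fst a = om_snd a -> x a = kg_id (kg_rng (x a)))].

Definition kpath k (L : kgraph k) := {x : Omega k -> kg_mor L | is_kpath x}.
HB.instance Definition _ k (L : kgraph k) := gen_eqMixin (kpath L).
HB.instance Definition _ k (L : kgraph k) := gen_choiceMixin (kpath L).

Definition kpath_app k (L : kgraph k) (x : kpath L) : Omega k -> kg_mor L := sval x.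

Lemma le0Nk k (n : Nk k) : leNk (zeroNk k) n.
Proof. by apply/forallP => j; rewrite ffunE. Qed.

Definition cyl k (L : kgraph k) (l : kg_mor L) : set (kpath L) :=
  [set x | kpath_app x (exist _ (zeroNk k, kg_deg l) (le0Nk (kg_deg l))) = l].

Lemma leNk_shift k (i : 'I_k) (m n : Nk k) :
  leNk m n -> leNk (addNk m (eNk i)) (addNk n (eNk i)).
Proof.
move=> /forallP H; apply/forallP => j; rewrite !ffunE leq_add2r; exact: H.
Qed.

Definition om_shift k (i : 'I_k) (a : Omega k) : Omega k :=
  exist _ (addNk (om_fst a) (eNk i), addNk (om_snd a) (eNk i))
    (leNk_shift i (svalP a)).

Lemma shift_is_kpath k (L : kgraph k) (i : 'I_k) (x : kpath L) :
  is_kpath (fun a => kpath_app x (om_shift i a)).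
Proof.
case: x => x [Hd Hc Hi]; split.
- move=> a; rewrite /kpath_app /= Hd; apply/ffunP => j.
  by rewrite /om_shift /om_fst /om_snd /= !ffunE subnDr.
- move=> a b c e1 e2 e3; apply: Hc.
  + by rewrite /om_fst /= -/(om_fst a) -/(om_fst c) e1.
  + by rewrite /om_fst /om_snd /= -/(om_snd a) -/(om_fst b) e2.
  + by rewrite /om_snd /= -/(om_snd b) -/(om_snd c) e3.
- move=> a e; apply: Hi.
  by rewrite /om_fst /om_snd /= -/(om_fst a) -/(om_snd a) e.
Qed.

Definition kshift k (L : kgraph k) (i : 'I_k) (x : kpath L) : kpath L :=
  exist _ _ (shift_is_kpath i x).

Definition kpath_open k (L : kgraph k) (U : set (kpath L)) : Prop :=
  forall x, U x -> exists l : kg_mor L, cyl l x /\ cyl l `<=` U.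

Definition kcontinuous k (L : kgraph k) (R : realType) (f : kpath L -> R) : Prop :=
  forall V : set R, open V -> kpath_open (f @^-1` V).

Definition ruelle k (L : kgraph k) (R : realType) (i : 'I_k)
    (psi f : kpath L -> R) (x : kpath L) : R :=
  \sum_(y \in [set y | kshift i y = x]) expR (psi y) * f y.

(* Λ^∞ as a pointed type (measurable types in MathComp-Analysis must be   *)
(* pointed); the point x0 is irrelevant for the σ-algebra.               *)
Definition kpathP k (L : kgraph k) (x0 : kpath L) := kpath L.
HB.instance Definition _ k (L : kgraph k) (x0 : kpath L) :=
  Choice.on (kpathP x0).
HB.instance Definition _ k (L : kgraph k) (x0 : kpath L) :=
  isPointed.Build (kpathP x0) x0.

Definition kpath_openP k (L : kgraph k) (x0 : kpath L) : set (set (kpathP x0)) :=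
  @kpath_open k L.
Arguments kpath_openP {k L} x0 _.

Definition kpathB k (L : kgraph k) (x0 : kpath L) :=
  g_sigma_algebraType (kpath_openP x0).

(* L*_{σ_i,φ_i} μ = λ_i μ, i.e. μ(L_{σ_i,φ_i} f) = λ_i μ(f) for all f ∈ C(Λ^∞). *)
Definition eigen_solution k (L : kgraph k) (R : realType) (x0 : kpath L)
    (phi : 'I_k -> kpath L -> R) (lam : 'I_k -> R)
    (mu : probability (kpathB x0) R) : Prop :=
  (forall i, 0 < lam i) /\
  forall (i : 'I_k) (f : kpath L -> R), kcontinuous f ->
    (\int[mu]_y (ruelle i (phi i) f y)%:E = (lam i)%:E * \int[mu]_y (f y)%:E)%E.
Arguments eigen_solution {k L R} x0 phi lam mu.

Definition unique_eigen_solution k (L : kgraph k) (R : realType) (x0 : kpath L)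
    (phi : 'I_k -> kpath L -> R) : Prop :=
  exists lam mu, eigen_solution x0 phi lam mu /\
    forall lam' mu', eigen_solution x0 phi lam' mu' ->
      lam' = lam /\ forall A, measurable A -> mu' A = mu A.
Arguments unique_eigen_solution {k L R} x0 phi.

(* Let mu be a Borel probability measure with  L*_{sigma_i,phi_i} mu = lam_i mu
   for all i.  We show mu(Z(l)) > 0 by contradiction; only the eigen-equation
   and primitivity of the k-graph are needed.
   1. If l = e l' with d(e) = e_i, the function f = 1_{Z(l)} exp(-phi_i) is
      continuous (cylinders are clopen) and L_{sigma_i,phi_i} f = 1_{Z(l')},
      because the only sigma_i-preimage of x in Z(l') lying in Z(l) is the
      concatenated path e x.  Integrating against mu gives
      mu(Z(l')) = lam_i mu(f), which vanishes whenever mu(Z(l)) = 0.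
   2. Peeling off edges of degree e_i one at a time, a null Z(l) forces the
      cylinder of the source vertex s(l) to be null.
   3. By primitivity every vertex w is the source of some a with r(a) = s(l);
      then Z(a) is contained in Z(s(l)), so by 2 the cylinder Z(w) is null.
   4. The vertex cylinders form a countable cover of the path space, which
      contradicts mu(Lambda^infty) = 1.
   The file develops, in order: arithmetic in N^k, factorizations in a
   k-graph, segments of infinite paths, infinite paths built from coherent
   finite prefixes, concatenation of a path with an infinite path, cylinder
   sets, the Ruelle transform of the test function f, and the measure theory. *)

From HB Require Import structures.
From mathcomp Require Import all_boot all_order all_algebra.
From mathcomp Require Import all_classical all_reals.
From mathcomp Require Import topology normedtype sequences exp measure lebesgue_integral.
From mathcomp Require Import ereal numfun lebesgue_measure measurable_realfun.
Set Implicit Arguments. Unset Strict Implicit. Unset Printing Implicit Defensive.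
Import Order.TTheory GRing.Theory Num.Theory.
Import numFieldTopology.Exports numFieldNormedType.Exports.
Local Open Scope classical_set_scope.
Local Open Scope ring_scope.

Section NkArith.
Variable k : nat.
Implicit Types m n p : Nk k.

Lemma addNkC m n : addNk m n = addNk n m.
Proof. by apply/ffunP => j; rewrite !ffunE addnC. Qed.

Lemma add0Nk m : addNk (zeroNk k) m = m.
Proof. by apply/ffunP => j; rewrite !ffunE add0n. Qed.

Lemma addNkI m n p : addNk m n = addNk m p -> n = p.
Proof.
move=> /ffunP E; apply/ffunP => j.
by move: (E j); rewrite !ffunE; exact: addnI.
Qed.

Lemma subNkK m n : leNk m n -> addNk m (subNk n m) = n.
Proof. by move=> /forallP le_mn; apply/ffunP => j; rewrite !ffunE subnKC. Qed.

Lemma addNkKs m n : subNk (addNk m n) m = n.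
Proof. by apply/ffunP => j; rewrite !ffunE addKn. Qed.

Lemma subNk0 n : subNk n (zeroNk k) = n.
Proof. by apply/ffunP => j; rewrite !ffunE subn0. Qed.

Lemma subNkn m : subNk m m = zeroNk k.
Proof. by apply/ffunP => j; rewrite !ffunE subnn. Qed.

Lemma leNk_refl m : leNk m m.
Proof. by apply/forallP. Qed.

Lemma leNk_trans m n p : leNk m n -> leNk n p -> leNk m p.
Proof.
move=> /forallP le_mn /forallP le_np; apply/forallP => j.
exact: leq_trans (le_mn j) (le_np j).
Qed.

Lemma leNk_addr m n : leNk m (addNk m n).
Proof. by apply/forallP => j; rewrite ffunE leq_addr. Qed.

Lemma leNk_add2r m n p : leNk m n -> leNk (addNk m p) (addNk n p).
Proof.
by move=> /forallP le_mn; apply/forallP => j; rewrite !ffunE leq_add2r.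
Qed.

Definition maxNk m n : Nk k := [ffun j => maxn (m j) (n j)].

Lemma leNk_maxl m n : leNk m (maxNk m n).
Proof. by apply/forallP => j; rewrite ffunE leq_maxl. Qed.

Lemma leNk_maxr m n : leNk n (maxNk m n).
Proof. by apply/forallP => j; rewrite ffunE leq_maxr. Qed.

Definition sizeNk n : nat := (\sum_j n j)%N.

Lemma nonzeroNk_gen n : n != zeroNk k -> exists i, leNk (eNk i) n.
Proof.
move=> /eqP nz; have [i pos_i] : exists i, (0 < n i)%N.
  apply: contra_notP nz => none; apply/ffunP => j; rewrite ffunE.
  by apply/eqP; rewrite -leqn0 leqNgt; apply/negP => pos; apply: none; exists j.
by exists i; apply/forallP => j; rewrite ffunE; case: eqP => [->|].
Qed.

Lemma sizeNk_gen i n : sizeNk (addNk (eNk i) n) = (sizeNk n).+1.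
Proof.
rewrite /sizeNk (eq_bigr (fun j => eNk i j + n j)%N); last by move=> j _; rewrite ffunE.
by rewrite big_split /= (bigD1 i) //= ffunE eqxx big1 // => j /negbTE ne_ji;
  rewrite ffunE ne_ji.
Qed.

End NkArith.

Section Factorization.
Variables (k : nat) (L : kgraph k).
Implicit Types (l u v w : kg_mor L) (m n : Nk k).

Definition factors l u v : Prop := kg_src u = kg_rng v /\ kg_comp u v = l.

Lemma factors_deg l u v : factors l u v -> kg_deg l = addNk (kg_deg u) (kg_deg v).
Proof. by case=> composable <-; rewrite kg_deg_comp. Qed.

Lemma factors_src l u v : factors l u v -> kg_src l = kg_src v.
Proof. by case=> composable <-; rewrite kg_src_comp. Qed.

Lemma factors_rng l u v : factors l u v -> kg_rng l = kg_rng u.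
Proof. by case=> composable <-; rewrite kg_rng_comp. Qed.

Lemma factors_uniq l u1 v1 u2 v2 : kg_deg u1 = kg_deg u2 ->
  factors l u1 v1 -> factors l u2 v2 -> u1 = u2 /\ v1 = v2.
Proof.
move=> du f1 f2.
have dv : kg_deg v1 = kg_deg v2.
  by apply: (@addNkI _ (kg_deg u1)); rewrite -(factors_deg f1) du -(factors_deg f2).
have [p [_ unique_p]] := kg_fact (factors_deg f1).
case: f1 f2 => s1 c1 [s2 c2].
have p1 : p = (u1, v1) by apply: unique_p.
have p2 : p = (u2, v2) by apply: unique_p; split => /=; rewrite -?du -?dv.
by move: p2; rewrite p1 => -[-> ->].
Qed.

Lemma factors_exist l m n : kg_deg l = addNk m n ->
  exists u v, [/\ kg_deg u = m, kg_deg v = n & factors l u v].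
Proof. by move=> /kg_fact [[u v] [[/= ? ? ? ?] _]]; exists u, v. Qed.

Lemma factors_idl l : factors l (kg_id (kg_rng l)) l.
Proof. by split; rewrite ?kg_src_id ?kg_id_l. Qed.

Lemma deg0_id l : kg_deg l = zeroNk k -> l = kg_id (kg_rng l).
Proof.
move=> d0; have idr : factors l l (kg_id (kg_src l)) by split; rewrite ?kg_rng_id ?kg_id_r.
have [E _] := factors_uniq (etrans (kg_deg_id _) (esym d0)) (factors_idl l) idr.
exact: esym E.
Qed.

Lemma factors_assoc l u v w : kg_src u = kg_rng v -> kg_src v = kg_rng w ->
  l = kg_comp (kg_comp u v) w -> factors l u (kg_comp v w) /\ factors l (kg_comp u v) w.
Proof.
move=> s_uv s_vw ->; split; split.
- by rewrite kg_rng_comp.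
- by rewrite kg_assoc.
- by rewrite kg_src_comp.
- by [].
Qed.

(* The factorization of l whose first factor has degree m (meaningful for
   m <= d(l)); it is chosen classically but is unique by [factors_uniq]. *)
Definition split_at l m : kg_mor L * kg_mor L :=
  match pselect (exists p : kg_mor L * kg_mor L, kg_deg p.1 = m /\ factors l p.1 p.2) with
  | left h => projT1 (cid h)
  | right _ => (l, l)
  end.

Lemma split_atP l m u v : kg_deg u = m -> factors l u v -> split_at l m = (u, v).
Proof.
move=> du f; rewrite /split_at; case: pselect => [h|[]]; last by exists (u, v).
case: (cid h) => [[u' v'] /= [du' f']].
by have [-> ->] := factors_uniq (etrans du' (esym du)) f' f.
Qed.

Lemma split_at_spec l m : leNk m (kg_deg l) ->
  kg_deg (split_at l m).1 = m /\ factors l (split_at l m).1 (split_at l m).2.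
Proof.
move=> le_m; have [u [v [du _ f]]] := factors_exist (esym (subNkK le_m)).
by rewrite (split_atP du f).
Qed.

Lemma deg0_src l : kg_deg l = zeroNk k -> l = kg_id (kg_src l).
Proof. by move=> d0; rewrite {2}(deg0_id d0) kg_src_id; exact: deg0_id. Qed.

Lemma first_edge l : kg_deg l != zeroNk k ->
  exists i e l', kg_deg e = eNk i /\ factors l e l'.
Proof.
move=> /nonzeroNk_gen [i le_il].
have [e [l' [de _ fl]]] := factors_exist (esym (subNkK le_il)).
by exists i, e, l'.
Qed.

End Factorization.

Section Segments.
Variables (k : nat) (L : kgraph k).
Implicit Types (m n p : Nk k) (x y : kpath L).

(* The point (m, n) of Omega_k (a default point when m <= n fails). *)
Definition omega_pt m n : Omega k :=
  insubd (exist _ (zeroNk k, zeroNk k) (le0Nk _) : Omega k) (m, n).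

Definition seg x m n : kg_mor L := kpath_app x (omega_pt m n).

Lemma omega_ptK m n : leNk m n -> om_fst (omega_pt m n) = m /\ om_snd (omega_pt m n) = n.
Proof. by move=> le_mn; rewrite /om_fst /om_snd -[sval _]/(val (omega_pt m n)) insubdK. Qed.

Lemma kpath_appE x a : kpath_app x a = seg x (om_fst a) (om_snd a).
Proof.
rewrite /seg /omega_pt /om_fst /om_snd; congr kpath_app.
by rewrite -[sval a]/(val a) -surjective_pairing valKd.
Qed.

Lemma seg_deg x m n : leNk m n -> kg_deg (seg x m n) = subNk n m.
Proof.
move=> le_mn; have [deg_x _ _] := svalP x.
by rewrite /seg /kpath_app deg_x; case: (omega_ptK le_mn) => -> ->.
Qed.

Lemma seg0_deg x n : kg_deg (seg x (zeroNk k) n) = n.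
Proof. by rewrite seg_deg ?le0Nk ?subNk0. Qed.

Lemma seg_factors x m n p : leNk m n -> leNk n p ->
  factors (seg x m p) (seg x m n) (seg x n p).
Proof.
move=> le_mn le_np; have [_ comp_x _] := svalP x.
have [a1 a2] := omega_ptK le_mn; have [b1 b2] := omega_ptK le_np.
have [c1 c2] := omega_ptK (leNk_trans le_mn le_np).
have [s e] := comp_x (omega_pt m n) (omega_pt n p) (omega_pt m p)
  (etrans a1 (esym c1)) (etrans a2 (esym b1)) (etrans b2 (esym c2)).
by split.
Qed.

Lemma seg_id x m : seg x m m = kg_id (kg_rng (seg x m m)).
Proof.
have [_ _ id_x] := svalP x; rewrite /seg /kpath_app; apply: id_x.
by case: (omega_ptK (leNk_refl m)) => -> ->.
Qed.

Lemma seg_shift x (i : 'I_k) m n : leNk m n ->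
  seg (kshift i x) m n = seg x (addNk m (eNk i)) (addNk n (eNk i)).
Proof.
move=> le_mn; rewrite /seg /kshift /kpath_app /=; congr (sval x _); apply: val_inj.
rewrite /= /omega_pt insubdK ?insubdK //=; last exact: leNk_shift.
by case: (omega_ptK le_mn) => -> ->.
Qed.

Lemma rng_seg0 x n : kg_rng (seg x (zeroNk k) n) = kg_rng (seg x (zeroNk k) (zeroNk k)).
Proof. exact: factors_rng (seg_factors x (leNk_refl _) (le0Nk n)). Qed.

Lemma seg_ext x y : (forall m n, leNk m n -> seg x m n = seg y m n) -> x = y.
Proof.
case: x => f kpath_f; case: y => g kpath_g same_seg.
have E : f = g.
  apply: funext => a; have := same_seg _ _ (svalP a).
  by rewrite -!kpath_appE.
by subst; congr exist; exact: Prop_irrelevance.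
Qed.

Lemma seg_agree x y m n N : leNk m n -> leNk n N ->
  seg x (zeroNk k) N = seg y (zeroNk k) N -> seg x m n = seg y m n.
Proof.
move=> le_mn le_nN E.
have same_deg z z' q : kg_deg (seg z (zeroNk k) q) = kg_deg (seg z' (zeroNk k) q).
  by rewrite !seg0_deg.
have f1 := seg_factors x (le0Nk n) le_nN; rewrite E in f1.
have [E2 _] := factors_uniq (same_deg _ _ _) f1 (seg_factors y (le0Nk n) le_nN).
have g1 := seg_factors x (le0Nk m) le_mn; rewrite E2 in g1.
by have [_ ->] := factors_uniq (same_deg _ _ _) g1 (seg_factors y (le0Nk m) le_mn).
Qed.

End Segments.

Section PathOfPrefixes.
Variables (k : nat) (L : kgraph k) (g : Nk k -> kg_mor L).
Hypothesis deg_g : forall n, kg_deg (g n) = n.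
Hypothesis coherent_g : forall m n, leNk m n -> exists w, factors (g n) (g m) w.

Lemma split_prefix m n : leNk m n ->
  [/\ (split_at (g n) m).1 = g m, factors (g n) (g m) (split_at (g n) m).2
    & kg_deg (split_at (g n) m).2 = subNk n m].
Proof.
move=> le_mn; have [w fw] := coherent_g le_mn.
rewrite (split_atP (deg_g m) fw) /=; split => //.
by have := factors_deg fw; rewrite !deg_g => ->; rewrite addNkKs.
Qed.

Definition prefix_fun (a : Omega k) : kg_mor L := (split_at (g (om_snd a)) (om_fst a)).2.

Lemma prefix_fun_comp m n p : leNk m n -> leNk n p ->
  factors (split_at (g p) m).2 (split_at (g n) m).2 (split_at (g p) n).2.
Proof.
move=> le_mn le_np.
have [_ fv _] := split_prefix le_mn; have [_ fw _] := split_prefix le_np.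
have [_ fu _] := split_prefix (leNk_trans le_mn le_np).
set v := (split_at (g n) m).2 in fv *; set w := (split_at (g p) n).2 in fw *.
have s_vw : kg_src v = kg_rng w by rewrite -(factors_src fv); case: fw.
have s_mv : kg_src (g m) = kg_rng v by case: fv.
have E : g p = kg_comp (kg_comp (g m) v) w by case: fw => _ <-; case: fv => _ ->.
have [f _] := factors_assoc s_mv s_vw E.
by split => //; have [_ <-] := factors_uniq erefl f fu.
Qed.

Lemma prefix_fun_kpath : is_kpath prefix_fun.
Proof.
split.
- by move=> a; rewrite /prefix_fun; case: (split_prefix (svalP a)).
- move=> a b c e1 e2 e3; rewrite /prefix_fun -e1 e2 e3.
  apply: prefix_fun_comp; first by rewrite -e2; exact: (svalP a).
  by rewrite -e3; exact: (svalP b).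
- move=> a e; rewrite /prefix_fun; apply: deg0_id.
  by case: (split_prefix (svalP a)) => _ _ ->; rewrite -/(om_fst a) -/(om_snd a) e subNkn.
Qed.

Definition path_of_prefixes : kpath L := exist _ prefix_fun prefix_fun_kpath.

Lemma seg_path_of_prefixes m n : leNk m n ->
  seg path_of_prefixes m n = (split_at (g n) m).2.
Proof.
move=> le_mn; rewrite /seg /kpath_app /= /prefix_fun.
by case: (omega_ptK le_mn) => -> ->.
Qed.

Lemma seg0_path_of_prefixes n : seg path_of_prefixes (zeroNk k) n = g n.
Proof.
rewrite seg_path_of_prefixes ?le0Nk //.
by have := split_atP _ (factors_idl (g n)); rewrite kg_deg_id => ->.
Qed.

End PathOfPrefixes.

(* Concatenation e x of a morphism e with an infinite path x starting at
   s(e): its prefix of degree n is the initial degree-n factor of the finite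
   path e x(0, n). *)
Section Concatenation.
Variables (k : nat) (L : kgraph k) (x : kpath L) (e : kg_mor L).
Hypothesis s_e : kg_src e = kg_rng (seg x (zeroNk k) (zeroNk k)).
Implicit Types m n : Nk k.

Definition cat_prefix n : kg_mor L := kg_comp e (seg x (zeroNk k) n).

Lemma cat_prefix_deg n : kg_deg (cat_prefix n) = addNk n (kg_deg e).
Proof. by rewrite /cat_prefix kg_deg_comp ?rng_seg0 // seg0_deg addNkC. Qed.

Lemma cat_prefix_factors m n : leNk m n ->
  factors (cat_prefix n) (cat_prefix m) (seg x m n).
Proof.
move=> le_mn; have [s c] := seg_factors x (le0Nk m) le_mn.
have s_em : kg_src e = kg_rng (seg x (zeroNk k) m) by rewrite rng_seg0.
have E : cat_prefix n = kg_comp (kg_comp e (seg x (zeroNk k) m)) (seg x m n).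
  by rewrite /cat_prefix -c kg_assoc.
by have [_] := factors_assoc s_em s E.
Qed.

Definition cat_head n : kg_mor L := (split_at (cat_prefix n) n).1.

Lemma cat_head_spec n :
  kg_deg (cat_head n) = n /\ factors (cat_prefix n) (cat_head n) (split_at (cat_prefix n) n).2.
Proof. by apply: split_at_spec; rewrite cat_prefix_deg; exact: leNk_addr. Qed.

Lemma cat_head_coherent m n : leNk m n -> exists w, factors (cat_head n) (cat_head m) w.
Proof.
move=> le_mn.
have [dn fn] := cat_head_spec n; have [dm fm] := cat_head_spec m.
have [u [w [du dw fuw]]] := factors_exist (etrans dn (esym (subNkK le_mn))).
exists w; suff <- : u = cat_head m by [].
have fmn := cat_prefix_factors le_mn.
set rn := (split_at (cat_prefix n) n).2 in fn; set rm := (split_at (cat_prefix m) m).2 in fm.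
(* cat_prefix n = (u w) rn = (cat_head m rm) x(m, n), two factorizations
   whose first factors both have degree m. *)
have EA : cat_prefix n = kg_comp (kg_comp u w) rn by case: fn => _ <-; case: fuw => _ ->.
have EB : cat_prefix n = kg_comp (kg_comp (cat_head m) rm) (seg x m n).
  by case: fmn => _ <-; case: fm => _ ->.
have [A _] := factors_assoc (proj1 fuw) (etrans (esym (factors_src fuw)) (proj1 fn)) EA.
have [B _] := factors_assoc (proj1 fm) (etrans (esym (factors_src fm)) (proj1 fmn)) EB.
by have [] := factors_uniq (etrans du (esym dm)) A B.
Qed.

Definition cat_path : kpath L :=
  path_of_prefixes (fun n => (cat_head_spec n).1) cat_head_coherent.

Lemma cat_head_shift n : cat_head (addNk n (kg_deg e)) = cat_prefix n.
Proof.
have f := cat_prefix_factors (leNk_addr n (kg_deg e)).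
by rewrite /cat_head (split_atP (cat_prefix_deg n) f).
Qed.

Lemma seg0_cat_path n : seg cat_path (zeroNk k) (addNk n (kg_deg e)) = cat_prefix n.
Proof. by rewrite /cat_path seg0_path_of_prefixes cat_head_shift. Qed.

Lemma seg_cat_path m n : leNk m n ->
  seg cat_path (addNk m (kg_deg e)) (addNk n (kg_deg e)) = seg x m n.
Proof.
move=> le_mn; rewrite /cat_path seg_path_of_prefixes; last exact: leNk_add2r.
by rewrite cat_head_shift (split_atP (cat_prefix_deg m) (cat_prefix_factors le_mn)).
Qed.

End Concatenation.

Section Cylinders.
Variables (k : nat) (L : kgraph k).
Implicit Types (l e : kg_mor L) (n N : Nk k) (x y z : kpath L).

Lemma cylE x l : cyl l x <-> seg x (zeroNk k) (kg_deg l) = l.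
Proof.
rewrite /cyl /seg /=; suff -> : omega_pt (zeroNk k) (kg_deg l) =
  exist _ (zeroNk k, kg_deg l) (le0Nk (kg_deg l)) by [].
by apply: val_inj; rewrite /omega_pt insubdK //; exact: le0Nk.
Qed.

Lemma cyl_self x n : cyl (seg x (zeroNk k) n) x.
Proof. by apply/cylE; rewrite seg0_deg. Qed.

Lemma cyl_rng x : cyl (kg_id (kg_rng (seg x (zeroNk k) (zeroNk k)))) x.
Proof. by apply/cylE; rewrite kg_deg_id -seg_id. Qed.

Lemma cyl_vertex x l : cyl l x -> cyl (kg_id (kg_rng l)) x.
Proof. by move=> /cylE <-; rewrite rng_seg0; exact: cyl_rng. Qed.

Lemma cyl_sub x l N : cyl l x -> leNk (kg_deg l) N ->
  cyl (seg x (zeroNk k) N) `<=` cyl l.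
Proof.
move=> /cylE xl le_lN z /cylE; rewrite seg0_deg => zN.
by apply/cylE; exact: etrans (seg_agree (le0Nk _) le_lN zN) xl.
Qed.

Lemma cyl_refine x l1 l2 : cyl l1 x -> cyl l2 x ->
  exists l, cyl l x /\ cyl l `<=` cyl l1 `&` cyl l2.
Proof.
move=> x1 x2; exists (seg x (zeroNk k) (maxNk (kg_deg l1) (kg_deg l2))).
split; first exact: cyl_self.
move=> z z_in; split.
- exact: cyl_sub x1 (leNk_maxl _ _) _ z_in.
- exact: cyl_sub x2 (leNk_maxr _ _) _ z_in.
Qed.

Lemma cyl_open l : kpath_open (cyl l).
Proof. by move=> x x_in; exists l; split. Qed.

Lemma cylC_open l : kpath_open (~` cyl l).
Proof.
move=> x x_out; exists (seg x (zeroNk k) (kg_deg l)); split; first exact: cyl_self.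
move=> z /cylE; rewrite seg0_deg => zx /cylE zl.
by apply: x_out; apply/cylE; rewrite -zx zl.
Qed.

Lemma shift_inj (i : 'I_k) y1 y2 :
  seg y1 (zeroNk k) (eNk i) = seg y2 (zeroNk k) (eNk i) ->
  kshift i y1 = kshift i y2 -> y1 = y2.
Proof.
move=> same_edge same_shift; apply: seg_ext => m n le_mn.
have le_ni : leNk n (addNk n (eNk i)) by exact: leNk_addr.
apply: (seg_agree le_mn le_ni).
have le_in : leNk (eNk i) (addNk n (eNk i)) by rewrite addNkC; exact: leNk_addr.
have [_ <-] := seg_factors y1 (le0Nk _) le_in; have [_ <-] := seg_factors y2 (le0Nk _) le_in.
have shifted y : seg y (eNk i) (addNk n (eNk i)) = seg (kshift i y) (zeroNk k) n.
  by rewrite seg_shift ?le0Nk // add0Nk.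
by rewrite same_edge !shifted same_shift.
Qed.

Lemma shift_cyl (i : 'I_k) e l l' y :
  kg_deg e = eNk i -> factors l e l' -> cyl l y ->
  cyl l' (kshift i y) /\ seg y (zeroNk k) (eNk i) = e.
Proof.
move=> de fl /cylE yl.
have dl : kg_deg l = addNk (eNk i) (kg_deg l') by rewrite (factors_deg fl) de.
have le_il : leNk (eNk i) (kg_deg l) by rewrite dl; exact: leNk_addr.
have f := seg_factors y (le0Nk _) le_il; rewrite yl in f.
have [edge tail] := factors_uniq (etrans (seg0_deg _ _) (esym de)) f fl.
split => //; apply/cylE.
by rewrite seg_shift ?le0Nk // add0Nk addNkC -dl.
Qed.

Lemma cat_path_cyl (i : 'I_k) e l l' x
    (s_e : kg_src e = kg_rng (seg x (zeroNk k) (zeroNk k))) :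
  kg_deg e = eNk i -> factors l e l' -> cyl l' x ->
  kshift i (cat_path s_e) = x /\ cyl l (cat_path s_e).
Proof.
move=> de fl xl'; split.
  by apply: seg_ext => m n le_mn; rewrite seg_shift // -de; exact: seg_cat_path.
apply/cylE; rewrite (factors_deg fl) addNkC seg0_cat_path /cat_prefix.
by move/cylE: xl' ->; case: fl.
Qed.

End Cylinders.

Section RuelleTransform.
Variables (k : nat) (L : kgraph k) (R : realType).
Implicit Types (l e : kg_mor L) (x y : kpath L) (psi : kpath L -> R).

Definition cyl_weight psi l (y : kpath L) : R := \1_(cyl l) y * expR (- psi y).

(* f is continuous: locally it is either 0 or exp(-psi). *)
Lemma cyl_weight_cont psi l : kcontinuous psi -> kcontinuous (cyl_weight psi l).
Proof.
move=> cont_psi V oV y /= Vy.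
have [yl|yl] := pselect (cyl l y); last first.
  have [c [yc sub]] := cylC_open yl.
  exists c; split => // z /sub zl.
  by move: Vy; rewrite /= /cyl_weight !indicE !memNset // !mul0r.
have cont_exp : continuous (fun r : R => expR (- r)).
  by move=> r; apply: continuous_comp; [exact: oppr_continuous | exact: continuous_expR].
have oW := (continuousP _).1 cont_exp V oV.
have Wy : (psi @^-1` ((fun r : R => expR (- r)) @^-1` V)) y.
  by move: Vy; rewrite /cyl_weight indicE mem_set // mul1r.
have [c1 [yc1 sub1]] := cont_psi _ oW y Wy.
have [c [yc sub]] := cyl_refine yc1 yl.
exists c; split => // z /sub [z1 z2].
by rewrite /= /cyl_weight indicE mem_set // mul1r; exact: sub1.
Qed.

(* If l = e l' with d(e) = e_i, then L_{sigma_i,psi} (1_{Z(l)} exp(-psi))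
   is the indicator of Z(l'): the only preimage contributing is e x. *)
Lemma ruelle_cyl_weight (i : 'I_k) psi l e l' :
  kg_deg e = eNk i -> factors l e l' ->
  forall x, ruelle i psi (cyl_weight psi l) x = \1_(cyl l') x.
Proof.
move=> de fl x; rewrite /ruelle indicE.
have [xl'|xl'] := pselect (cyl l' x); last first.
  rewrite memNset // fsbig1 // => y /= yx.
  rewrite /cyl_weight indicE memNset ?mul0r ?mulr0 // => yl.
  by apply: xl'; rewrite -yx; case: (shift_cyl de fl yl).
rewrite mem_set //.
have s_e : kg_src e = kg_rng (seg x (zeroNk k) (zeroNk k)).
  by case: fl => -> _; move/cylE: xl' => <-; rewrite rng_seg0.
have [ex ex_l] := cat_path_cyl s_e de fl xl'.
rewrite -(fsbig_widen [set cat_path s_e] [set y | kshift i y = x]) ?fsbig_set1.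
- by rewrite /cyl_weight indicE mem_set // mul1r expRN mulfV // gt_eqF // expR_gt0.
- by move=> z ->.
- move=> z [/= zx z_ne]; rewrite /= /cyl_weight indicE memNset ?mul0r ?mulr0 // => zl.
  apply: z_ne; apply: (@shift_inj _ _ i); last by rewrite zx ex.
  by rewrite (shift_cyl de fl zl).2 (shift_cyl de fl ex_l).2.
Qed.

End RuelleTransform.

Lemma integral_null_support d (T : measurableType d) (R : realType)
    (mu : {measure set T -> \bar R}) (N : set T) (f : T -> \bar R) :
  measurable N -> measurable_fun [set: T] f -> mu N = 0%E ->
  (forall t, ~ N t -> f t = 0%E) -> (\int[mu]_t f t = 0)%E.
Proof.
move=> mN mf null_N f0.
rewrite (_ : f = f \_ N); last first.
  by apply/funext => t; rewrite /patch; case: ifPn => // /negP; rewrite inE => /f0.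
by rewrite -integral_mkcond null_set_integral //; exact: measurable_funTS.
Qed.

Section Measurability.
Variables (k : nat) (L : kgraph k) (R : realType) (x0 : kpath L).

Lemma cyl_meas l : measurable (cyl l : set (kpathB x0)).
Proof. by apply: sub_sigma_algebra; exact: cyl_open. Qed.

Lemma kcont_meas (f : kpath L -> R) : kcontinuous f -> measurable_fun [set: kpathB x0] f.
Proof.
move=> cont_f; apply: (measurability _ (RGenOpens.measurableE R)).
move=> _ [_ [a [b ->] <-]]; rewrite setTI; apply: sub_sigma_algebra; apply: cont_f.
exact: interval_open.
Qed.

(* The cylinders of the vertices cover the path space, so they cannot all be
   null for a probability measure. *)
Lemma vertex_cyl_nonnull (mu : probability (kpathB x0) R) :
  exists w, mu (cyl (kg_id w)) != 0%E.
Proof.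
apply: contrapT => all_null.
have null_w w : mu (cyl (kg_id w)) = 0%E.
  by apply/eqP; apply: contra_notT all_null => nz; exists w.
pose F n : set (kpathB x0) := if unpickle n is Some w then cyl (kg_id w) else set0.
have mF n : measurable (F n) by rewrite /F; case: unpickle => [w|]; [exact: cyl_meas|].
have cover : [set: kpathB x0] `<=` \bigcup_n F n.
  move=> x _; exists (pickle (kg_rng (seg x (zeroNk k) (zeroNk k)))) => //.
  by rewrite /F pickleK; exact: cyl_rng.
have := measure_sigma_subadditive mu mF measurableT cover.
rewrite eseries0; last first.
  by move=> n _ _; rewrite /F; case: unpickle => [w|]; [exact: null_w | exact: measure0].
move=> le_10; suff : (1 <= (0 : \bar R))%E by rewrite lee_fin ler10.
by rewrite -(probability_setT mu).
Qed.

End Measurability.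

Section NullCylinders.
Variables (k : nat) (L : kgraph k) (R : realType) (x0 : kpath L)
  (phi : 'I_k -> kpath L -> R) (lam : 'I_k -> R) (mu : probability (kpathB x0) R).
Hypothesis cont_phi : forall i, kcontinuous (phi i).
Hypothesis eigen : eigen_solution x0 phi lam mu.

(* Step 1: mu(Z(l')) = lam_i mu(1_{Z(l)} exp(-phi_i)) for l = e l'. *)
Lemma null_cyl_tail (i : 'I_k) e l l' : kg_deg e = eNk i -> factors l e l' ->
  mu (cyl l) = 0%E -> mu (cyl l') = 0%E.
Proof.
move=> de fl null_l.
have f_cont : kcontinuous (cyl_weight (phi i) l) := cyl_weight_cont (@cont_phi i).
have := eigen.2 i _ f_cont.
under eq_integral do rewrite (ruelle_cyl_weight (phi i) de fl).
rewrite integral_indic ?setIT; last exact: cyl_meas.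
move=> ->; rewrite (@integral_null_support _ _ _ mu (cyl l)) ?mule0 //.
- exact: cyl_meas.
- by apply/measurable_EFinP; exact: kcont_meas.
- by move=> y yl; rewrite /cyl_weight indicE memNset ?mul0r.
- exact: measurableT.
Qed.

Lemma null_cyl_src l : mu (cyl l) = 0%E -> mu (cyl (kg_id (kg_src l))) = 0%E.
Proof.
move: {2}(sizeNk (kg_deg l)) (erefl (sizeNk (kg_deg l))) => n.
elim: n l => [|n IH] l size_l null_l; have [d0|nz] := eqVneq (kg_deg l) (zeroNk k).
- by rewrite -deg0_src.
- have [i [e [l' [de fl]]]] := first_edge nz.
  by move: size_l; rewrite (factors_deg fl) de sizeNk_gen.
- by rewrite -deg0_src.
- have [i [e [l' [de fl]]]] := first_edge nz.
  move: size_l; rewrite (factors_deg fl) de sizeNk_gen => -[size_l'].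
  by rewrite (factors_src fl); exact: IH (null_cyl_tail de fl null_l).
Qed.

Lemma null_cyl_vertices l : kg_primitive L -> mu (cyl l) = 0%E ->
  forall w, mu (cyl (kg_id w)) = 0%E.
Proof.
move=> [n [_ paths]] null_l w.
have [a [ra _ sa]] := paths (kg_src l) w.
have null_a : mu (cyl a) = 0%E.
  apply/eqP; rewrite -measure_le0 -(null_cyl_src null_l).
  apply: le_measure; rewrite ?inE; try exact: cyl_meas.
  by move=> z /cyl_vertex; rewrite ra.
by rewrite -sa; exact: null_cyl_src.
Qed.

End NullCylinders.

Theorem corollary6p9 (k : nat) (L : kgraph k) (R : realType) (x0 : kpath L)
    (phi : 'I_k -> kpath L -> R) :
  kg_source_free L -> kg_finite L -> kg_primitive L -> kg_nonempty L ->
  (forall i, kcontinuous (phi i)) ->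
  (forall i j : 'I_k, forall x : kpath L,
      phi i x + phi j (kshift i x) = phi j x + phi i (kshift j x)) ->
  unique_eigen_solution x0 phi ->
  forall (lam : 'I_k -> R) (mu : probability (kpathB x0) R),
    eigen_solution x0 phi lam mu ->
    forall l : kg_mor L, (0 < mu (cyl l))%E.
Proof.
move=> _ _ prim _ cont_phi _ _ lam mu eigen l.
rewrite lt0e measure_ge0 andbT; apply/eqP => null_l.
have [w /eqP] := vertex_cyl_nonnull mu; apply.
exact: (null_cyl_vertices cont_phi eigen prim null_l).
Qed.
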